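(* For every cell $\eta\in\Delta_k$ there is a unique cell $\eta'\in\Delta_{n-k}$ with $\mathsf{t}(\eta')=\mathsf{h}(\eta)$, $\mathsf{h}(\eta')=\mathsf{t}(\eta)$ and $x^{\operatorname{div}(\eta')}=x_1x_2\cdots x_n/x^{\operatorname{div}(\eta)}$, and the map $\tau:\Delta\to\Delta$, $\eta\mapsto\eta'$, is an involution.
   Context: $\mathbb{k}$ is an algebraically closed field, $G\subset\operatorname{SL}(n,\mathbb{k})$ a finite abelian group of diagonal matrices with $\operatorname{char}\mathbb{k}\nmid|G|$, $\rho_i\in G^*$ the $i$-th diagonal entry. Let $\deg:\mathbb{Z}^n\to G^*$, $\chi_i\mapsto\rho_i$, $M=\ker\deg$, $\mathbb{T}^n=\mathbb{R}^n/M$. For $u\in\mathbb{Z}^n$ and $S\subseteq\{1,\dots,n\}$ let $F(u,S)=\{u+\sum_{i\in S}\lambda_i\chi_i:0\le\lambda_i\le1\}$. The toric cell complex $\Delta$ is the set of images in $\mathbb{T}^n$ of the sets $F(u,S)$; $\Delta_k$ consists of those with $|S|=k$. For $\eta$ the image of $F(u,S)$: tail $\mathsf{t}(\eta)=\deg u\in G^*$, head $\mathsf{h}(\eta)=\deg(u+\sum_{i\in S}\chi_i)\in G^*$, label $\operatorname{div}(\eta)=\sum_{i\in S}\chi_i$, $x^{\operatorname{div}(\eta)}=\prod_{i\in S}x_i$. *)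

From HB Require Import structures.
From mathcomp Require Import all_boot all_order all_algebra.
From mathcomp Require Import reals.
From mathcomp Require Import mpoly.
From Stdlib Require Import ClassicalEpsilon.

Set Implicit Arguments.
Unset Strict Implicit.
Unset Printing Implicit Defensive.

Import Order.TTheory GRing.Theory Num.Theory.
Local Open Scope ring_scope.

(* Elements of G^* are represented by maps 'M[F]_n -> F, compared on G. *)
Definition deg (F : fieldType) (n : nat) (u : 'I_n -> int) : 'M[F]_n -> F :=
  fun g => \prod_(i < n) (g i i) ^ (u i).

Definition chareq (F : fieldType) (n : nat) (G : seq 'M[F]_n)
  (a b : 'M[F]_n -> F) : Prop := forall g, g \in G -> a g = b g.

Definition inM (F : fieldType) (n : nat) (G : seq 'M[F]_n) (u : 'I_n -> int) : Prop :=
  chareq G (deg u) (fun _ => 1).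

Definition chiS (n : nat) (S : {set 'I_n}) : 'I_n -> int :=
  fun i => Posz (i \in S).

Definition Fset (R : realType) (n : nat) (u : 'I_n -> int) (S : {set 'I_n}) :
  ('I_n -> R) -> Prop :=
  fun x => exists lam : 'I_n -> R,
    (forall i, i \in S -> 0 <= lam i <= 1) /\
    (forall i, x i = (u i)%:~R + (if i \in S then lam i else 0)).

(* The image of F(u,S) in T^n = R^n/M, represented by its (M-saturated)
   preimage F(u,S) + M in R^n. *)
Definition cell (R : realType) (F : fieldType) (n : nat) (G : seq 'M[F]_n)
  (u : 'I_n -> int) (S : {set 'I_n}) : ('I_n -> R) -> Prop :=
  fun x => exists m, inM G m /\ Fset u S (fun i => x i - (m i)%:~R).

Definition is_cellk (R : realType) (F : fieldType) (n : nat) (G : seq 'M[F]_n)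
  (k : nat) (eta : ('I_n -> R) -> Prop) : Prop :=
  exists u (S : {set 'I_n}), #|S| = k /\ eta = @cell R F n G u S.

Definition rep (R : realType) (F : fieldType) (n : nat) (G : seq 'M[F]_n)
  (eta : ('I_n -> R) -> Prop) : ('I_n -> int) * {set 'I_n} :=
  epsilon (inhabits ((fun _ => 0%R), set0))
    (fun p => eta = @cell R F n G p.1 p.2).

Definition tail (R : realType) (F : fieldType) (n : nat) (G : seq 'M[F]_n)
  (eta : ('I_n -> R) -> Prop) : 'M[F]_n -> F :=
  deg (rep G eta).1.

Definition head (R : realType) (F : fieldType) (n : nat) (G : seq 'M[F]_n)
  (eta : ('I_n -> R) -> Prop) : 'M[F]_n -> F :=
  deg (fun i => (rep G eta).1 i + chiS (rep G eta).2 i).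

Definition xdiv (R : realType) (F : fieldType) (n : nat) (G : seq 'M[F]_n)
  (eta : ('I_n -> R) -> Prop) : {mpoly F[n]} :=
  \prod_(i in (rep G eta).2) 'X_i.

Definition partner (R : realType) (F : fieldType) (n : nat) (G : seq 'M[F]_n)
  (k : nat) (eta eta' : ('I_n -> R) -> Prop) : Prop :=
  [/\ is_cellk G (n - k) eta',
      chareq G (tail G eta') (head G eta),
      chareq G (head G eta') (tail G eta) &
      xdiv G eta' * xdiv G eta = \prod_(i < n) 'X_i].

Definition tau (R : realType) (F : fieldType) (n : nat) (G : seq 'M[F]_n)
  (eta : ('I_n -> R) -> Prop) : ('I_n -> R) -> Prop :=
  epsilon (inhabits eta)
    (fun eta' => exists k, is_cellk G k eta /\ partner G k eta eta').

From Pilot Require Import Defs.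
From HB Require Import structures.
From mathcomp Require Import all_boot all_order all_algebra.
From mathcomp Require Import reals.
From mathcomp Require Import mpoly.
From mathcomp Require Import lra zify.
From Stdlib Require Import ClassicalEpsilon FunctionalExtensionality PropExtensionality.
Import Order.TTheory GRing.Theory Num.Theory.
Local Open Scope ring_scope.

Set Implicit Arguments.
Unset Strict Implicit.

(* A cell [cell u S] determines [S] and the character [deg u]: its centre
   [u + chi_S / 2] lies in [cell u' S'] only if [S] is contained in [S'], and
   if moreover [S'] is contained in [S], the integral offset between [u] and
   [u'] (modulo [M]) has all its coordinates in [-1/2, 1/2], so it vanishes.
   Hence the partner of [cell u S] is forced: the monomial condition gives
   [S' = ~: S] and the tail condition gives [deg u' = deg (u + chi_S)], so it
   is [cell (u + chi_S) (~: S)].  This cell does satisfy the head condition,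
   because [deg (chi_S + chi_(~: S)) = deg 1 = det = 1] on [G].  The partner
   relation is symmetric, which makes [tau] an involution. *)

Lemma intr_eq0_half (R : realFieldType) (z : int) :
  -(1/2) <= (z%:~R : R) <= 1/2 -> z = 0.
Proof.
move=> /andP [zlo zhi]; case: (ltgtP z 0) => [z_lt0 | z_gt0 | //]; exfalso.
  have : (z%:~R : R) <= (-1)%:~R by rewrite ler_int; lia.
  by rewrite rmorphN1; lra.
have : (1%:~R : R) <= z%:~R by rewrite ler_int; lia.
by rewrite rmorph1; lra.
Qed.

Lemma mprodX_complement (F : nzRingType) (n : nat) (A B : {set 'I_n}) :
  (\prod_(i in A) 'X_i) * (\prod_(i in B) 'X_i) = \prod_(i < n) 'X_i :> {mpoly F[n]} ->
  A = ~: B.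
Proof.
rewrite !mprodXE -mpolyXD => eX.
have /mnmP em : (\sum_(i in A) U_(i) + \sum_(i in B) U_(i))%MM = (\sum_(i < n) U_(i))%MM.
  have := congr1 (fun p => p@_(\sum_(i < n) U_(i))%MM) eX; rewrite !mcoeffX eqxx.
  by case: eqP => // _ /eqP; rewrite eq_sym oner_eq0.
have count_U (P : pred 'I_n) j : (\sum_(i | P i) U_(i)%MM j = P j)%N.
  rewrite (big_mkcond P) (bigD1 j) //= mnm1E eqxx big1 ?addn0.
    by case: (P j).
  by move=> i ij; rewrite mnm1E (negbTE ij); case: (P i).
apply/setP => j; have := em j.
by rewrite mnmDE !mnm_sumE !count_U in_setC; case: (j \in A); case: (j \in B).
Qed.

Section Cells.
Variables (F : fieldType) (R : realType) (n : nat) (G : seq 'M[F]_n).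
Hypothesis hGdiag : forall g, g \in G -> forall i j, i != j -> g i j = 0.
Hypothesis hGdet : forall g, g \in G -> \det g = 1.

Lemma det_diag_entries g : g \in G -> \det g = \prod_(i < n) g i i.
Proof.
by move=> gG; apply/det_trig/is_diag_mx_is_trig/is_diag_mxP => i j; apply: hGdiag.
Qed.

Lemma diag_entry_unit g i : g \in G -> g i i \is a GRing.unit.
Proof.
move=> gG; rewrite unitfE; apply/eqP => gii0.
have := hGdet gG; rewrite det_diag_entries // (bigD1 i) //= gii0 mul0r.
by move=> /esym/eqP; rewrite oner_eq0.
Qed.

Lemma eq_deg (u v : 'I_n -> int) : u =1 v -> @deg F n u =1 deg v.
Proof. by move=> euv g; apply: eq_bigr => i _; rewrite euv. Qed.

Lemma deg0 : @deg F n (fun _ => 0) =1 (fun _ => 1).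
Proof. by move=> g; apply: big1 => i _; rewrite expr0z. Qed.

Lemma deg_cst1 g : g \in G -> deg (fun _ : 'I_n => 1) g = 1.
Proof. by move=> gG; rewrite -(hGdet gG) det_diag_entries. Qed.

Lemma degD (u v : 'I_n -> int) g : g \in G ->
  deg (fun i => u i + v i) g = deg u g * deg v g.
Proof.
by move=> gG; rewrite -big_split; apply: eq_bigr => i _; rewrite exprzDr ?diag_entry_unit.
Qed.

Lemma degN (u : 'I_n -> int) g : g \in G -> deg (fun i => - u i) g * deg u g = 1.
Proof.
by move=> gG; rewrite -degD // (eq_deg (v := fun _ => 0)) ?deg0 // => i; rewrite addNr.
Qed.

Definition cell_center (u : 'I_n -> int) (S : {set 'I_n}) : 'I_n -> R :=
  fun i => (u i)%:~R + (if i \in S then 1/2 else 0).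

Lemma cell_center_in u S : cell G u S (cell_center u S).
Proof.
exists (fun _ => 0); split; first by move=> g _; exact: deg0.
exists (fun _ => 1/2); split; first by move=> i _; apply/andP; split; lra.
by move=> i; rewrite subr0.
Qed.

Lemma cell_center_sub u S u' S' : cell G u S (cell_center u' S') ->
  S' \subset S /\ (S \subset S' -> chareq G (deg u') (deg u)).
Proof.
case=> m [mM [lam [hlam hx]]].
pose z i := u' i - m i - u i.
have z_eq i : (z i)%:~R =
    (if i \in S then lam i else 0) - (if i \in S' then 1/2 else 0) :> R.
  have := hx i; rewrite /cell_center /z !rmorphB /=.
  move: (if i \in S then _ else _) (if i \in S' then _ else _) => a b; lra.
have z0 i : (i \in S -> i \in S') -> z i = 0.
  move=> SS'i; apply: (@intr_eq0_half R); rewrite z_eq.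
  case: (boolP (i \in S)) => [iS | _].
    by have := hlam i iS; rewrite SS'i // => /andP [? ?]; apply/andP; split; lra.
  by case: (i \in S'); apply/andP; split; lra.
split.
  apply/subsetP => i iS'; apply: contraT => iS.
  have zi0 : z i = 0 by apply: z0 => iS_; rewrite iS_ in iS.
  by have := z_eq i; rewrite zi0 mulr0z (negbTE iS) iS'; lra.
move=> SS' g gG.
rewrite (eq_deg (v := fun i => m i + u i)) ?degD ?mM ?mul1r // => i.
by have := z0 i (subsetP SS' i); rewrite /z; lia.
Qed.

Lemma cell_inj u S u' S' : cell (R := R) G u S = cell G u' S' ->
  S = S' /\ chareq G (deg u') (deg u).
Proof.
move=> eC.
have center'_in : cell G u S (cell_center u' S').
  by rewrite eC; apply: cell_center_in.
have center_in : cell G u' S' (cell_center u S).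
  by rewrite -eC; apply: cell_center_in.
have [S'S SS'_deg] := cell_center_sub center'_in.
have [SS' _] := cell_center_sub center_in.
by split; [apply/eqP; rewrite eqEsubset S'S SS' | apply: SS'_deg].
Qed.

Lemma eq_cell_deg u u' S : chareq G (deg u) (deg u') -> cell (R := R) G u S = cell G u' S.
Proof.
suff sub v v' : chareq G (deg v) (deg v') ->
    forall x : 'I_n -> R, cell G v S x -> cell G v' S x.
  move=> euu'; apply: functional_extensionality => x.
  by apply: propositional_extensionality; split; apply: sub => // g gG; rewrite euu'.
move=> evv' x [m [mM [lam [hlam hx]]]].
exists (fun i => m i + v i - v' i); split.
  by move=> g gG; rewrite !degD // mM // mul1r evv' // mulrC degN.
exists lam; split => // i; have := hx i; rewrite !rmorphB !rmorphD /=.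
move: (if i \in S then _ else _) => a; lra.
Qed.

Lemma cell_rep k (eta : ('I_n -> R) -> Prop) : is_cellk G k eta ->
  eta = cell G (rep G eta).1 (rep G eta).2.
Proof.
move=> [u [S [_ eta_uS]]].
by apply: (epsilon_spec _ (fun p => eta = cell G p.1 p.2)); exists (u, S).
Qed.

Definition dual_cell (eta : ('I_n -> R) -> Prop) : ('I_n -> R) -> Prop :=
  cell G (fun i => (rep G eta).1 i + chiS (rep G eta).2 i) (~: (rep G eta).2).

Lemma chiSC (S : {set 'I_n}) i : chiS S i + chiS (~: S) i = 1.
Proof. by rewrite /chiS in_setC; case: (i \in S). Qed.

Lemma dual_cell_partner k eta : is_cellk G k eta -> partner G k eta (dual_cell eta).
Proof.
move=> eta_k; have eta_rep := cell_rep eta_k.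
case: eta_k => u [S [cardS eta_uS]].
have [S_rep _] := cell_inj (etrans (esym eta_uS) eta_rep).
rewrite S_rep in cardS; set u0 := (rep G eta).1; set S0 := (rep G eta).2.
have dual_k : is_cellk G (n - k) (dual_cell eta).
  exists (fun i => u0 i + chiS S0 i), (~: S0); split => //.
  by move: (cardsC S0); rewrite card_ord cardS; lia.
have [dual_S dual_deg] := cell_inj (esym (cell_rep dual_k)).
rewrite /dual_cell -/u0 -/S0 in dual_S dual_deg.
split => //.
- by move=> g gG; rewrite /tail /Defs.head -dual_deg.
- move=> g gG; rewrite /tail /Defs.head dual_S degD // -dual_deg // degD //.
  by rewrite -mulrA -degD // (eq_deg (chiSC S0)) deg_cst1 // mulr1.
- rewrite /xdiv dual_S -/S0 mulrC [RHS](bigID (mem S0)) /=.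
  by congr (_ * _); apply: eq_bigl => i; rewrite in_setC.
Qed.

Lemma partner_dual_cell k eta eta' : partner G k eta eta' -> eta' = dual_cell eta.
Proof.
case=> eta'_k tail_eq _ xdiv_eq.
rewrite (cell_rep eta'_k) (mprodX_complement xdiv_eq).
exact: eq_cell_deg tail_eq.
Qed.

Lemma partner_sym k (eta eta' : ('I_n -> R) -> Prop) :
  is_cellk G k eta -> partner G k eta eta' -> partner G (n - k) eta' eta.
Proof.
move=> eta_k [eta'_k tail_eq head_eq xdiv_eq]; split => //.
- have [_ [S [cardS _]]] := eta_k.
  by have := max_card S; rewrite card_ord cardS => k_le; rewrite subKn.
- by move=> g gG; rewrite head_eq.
- by move=> g gG; rewrite tail_eq.
- by rewrite mulrC.
Qed.

Lemma tau_dual_cell k eta : is_cellk G k eta -> tau G eta = dual_cell eta.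
Proof.
move=> eta_k.
have [k' [_ ]] : exists k', is_cellk G k' eta /\ partner G k' eta (tau G eta).
  apply: (epsilon_spec _ (fun e => exists k', is_cellk G k' eta /\ partner G k' eta e)).
  by exists (dual_cell eta), k; split => //; apply: dual_cell_partner.
exact: partner_dual_cell.
Qed.

End Cells.

Theorem proposition4p6 (F : closedFieldType) (R : realType) (n : nat)
  (G : seq 'M[F]_n)
  (hGuniq : uniq G)
  (hG1 : 1%:M \in G)
  (hGmul : forall g h, g \in G -> h \in G -> g *m h \in G)
  (hGdiag : forall g, g \in G -> forall i j, i != j -> g i j = 0)
  (hGdet : forall g, g \in G -> \det g = 1)
  (hchar : (size G)%:R != 0 :> F) :
  forall (k : nat) (eta : ('I_n -> R) -> Prop),
    is_cellk G k eta ->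
    (exists! eta', partner G k eta eta') /\ tau G (tau G eta) = eta.
Proof.
move=> k eta eta_k.
have eta_dual := dual_cell_partner hGdiag hGdet eta_k.
have [dual_k _ _ _] := eta_dual.
split.
  by exists (dual_cell G eta); split => // eta' /(partner_dual_cell hGdiag hGdet).
rewrite (tau_dual_cell hGdiag hGdet eta_k) (tau_dual_cell hGdiag hGdet dual_k).
exact: esym (partner_dual_cell hGdiag hGdet (partner_sym eta_k eta_dual)).
Qed.
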